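(* Let $g\geq 2$, $h$ and $t$ be integers with $2\leq t\leq \log h/\log g$. Then there exists a partition $\mathbb{N}=W_0\cup\cdots\cup W_{h-1}$ (into pairwise disjoint sets) such that each set $W_r$ ($0\le r\le h-1$) is a union of infinitely many intervals of at least $t$ consecutive integers, and $$A=A_g(W_0)\cup\cdots\cup A_g(W_{h-1})$$ is not a minimal asymptotic basis of order $h$.
   Context: $\mathbb{N}$ denotes the set of all nonnegative integers. For a nonempty $W\subseteq\mathbb{N}$ and an integer $g\ge 2$, $A_g(W)$ is the set of all numbers of the form $\sum_{f\in F}a_f g^f$, where $F$ is a finite nonempty subset of $W$ and $1\le a_f\le g-1$ for each $f\in F$. For $A\subseteq\mathbb{N}$ and $h\ge 2$, let $r_h(A,n)$ be the number of $h$-tuples $(a_1,\dots,a_h)\in A^h$ with $a_1+\cdots+a_h=n$. The set $A$ is an asymptotic basis of order $h$ if $r_h(A,n)\ge 1$ for all sufficiently large integers $n$. An asymptotic basis $A$ of order $h$ is minimal if no proper subset of $A$ is an asymptotic basis of order $h$. *)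

From mathcomp Require Import all_boot.
Set Implicit Arguments. Unset Strict Implicit. Unset Printing Implicit Defensive.

Definition Ag (g : nat) (W : nat -> Prop) : nat -> Prop :=
  fun n => exists (F : seq nat) (a : nat -> nat),
    [/\ F != [::], uniq F, (forall f, f \in F -> W f),
        (forall f, f \in F -> 1 <= a f <= g - 1)
      & n = \sum_(f <- F) a f * g ^ f].

Definition rep_ge1 (A : nat -> Prop) (h n : nat) : Prop :=
  exists a : 'I_h -> nat, (forall i, A (a i)) /\ \sum_(i < h) a i = n.

Definition asymptotic_basis (A : nat -> Prop) (h : nat) : Prop :=
  exists N, forall n, N <= n -> rep_ge1 A h n.

Definition minimal_asymptotic_basis (A : nat -> Prop) (h : nat) : Prop :=
  asymptotic_basis A h /\
  forall B : nat -> Prop, (forall x, B x -> A x) -> (exists x, A x /\ ~ B x) ->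
    ~ asymptotic_basis B h.

Definition union_inf_intervals (W : nat -> Prop) (t : nat) : Prop :=
  exists I : nat -> nat * nat,
    injective I /\ (forall k, t <= (I k).2) /\
    forall x, W x <-> exists k, (I k).1 <= x < (I k).1 + (I k).2.

(* Cut the base-g digit positions into blocks of length k + t, with k = t + h: the
   first k positions of every block belong to W_0, and the last t positions of the
   i-th block to W_(1 + i mod (h - 1)).  Then 1 lies in A_g(W_0), and A minus 1 is
   still an asymptotic basis of order h.  Write n in base G = g^(k + t); numbers
   whose G-digits are all below L = g^k lie in A_g(W_0), and multiples of L whose
   nonzero G-digits sit in blocks of one class s lie in A_g(W_s).
   - If some G-digit exceeds h(L - 1), its low part (mod L) is large: n splits into
     the low parts of all digits, one summand in A_g(W_0), plus, for each class s,
     the high parts of the blocks of class s; a class with no high part receives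
     g G^i0, paid for by the large low digit at position i0.
   - Otherwise each digit splits evenly into h shares below L; the resulting h
     summands are at least 2 as soon as some digit is at least h at a position > 0,
     or at least 2h.
   - If all digits are below 2h, borrow one unit from the leading digit M: the part
     (G - L) G^(M-1) lies in a single A_g(W_s), and the rest splits evenly into
     h - 1 shares.
   The choice k = t + h makes L large compared with h g^t, as the first case needs. *)
From mathcomp Require Import all_boot zify.

Definition from_digits (B : nat) (f : nat -> nat) (m : nat) : nat :=
  \sum_(i < m) f i * B ^ i.

Definition digit (B n i : nat) : nat := n %/ B ^ i %% B.

Section FromDigits.
Variable B : nat.

Lemma eq_from_digits f f' m :
  (forall i, i < m -> f i = f' i) -> from_digits B f m = from_digits B f' m.
Proof. by move=> ff'; apply: eq_bigr => i _; rewrite ff'. Qed.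

Lemma from_digitsS f m :
  from_digits B f m.+1 = f 0 + B * from_digits B (fun i => f i.+1) m.
Proof.
rewrite /from_digits big_ord_recl expn0 muln1 big_distrr; congr (_ + _).
by apply: eq_bigr => i _; rewrite expnS mulnCA.
Qed.

Lemma from_digitsD f f' m :
  from_digits B f m + from_digits B f' m = from_digits B (fun i => f i + f' i) m.
Proof. by rewrite -big_split; apply: eq_bigr => i _; rewrite mulnDl. Qed.

Lemma from_digits_sum n (F : nat -> nat -> nat) m :
  \sum_(j < n) from_digits B (F j) m = from_digits B (fun i => \sum_(j < n) F j i) m.
Proof. by rewrite exchange_big; apply: eq_bigr => i _; rewrite big_distrl. Qed.

Lemma from_digits_delta m i0 c :
  i0 < m -> from_digits B (fun i => (i == i0) * c) m = c * B ^ i0.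
Proof.
move=> i0m; rewrite /from_digits (bigD1 (Ordinal i0m)) //= eqxx mul1n big1 ?addn0 //.
move=> i neq; suff /negbTE-> : nat_of_ord i != i0 by [].
by apply: contra neq => /eqP eq_i; apply/eqP/val_inj.
Qed.

Lemma leq_term_from_digits f m i : i < m -> f i * B ^ i <= from_digits B f m.
Proof. by move=> im; rewrite /from_digits (bigD1 (Ordinal im)) //= leq_addr. Qed.

Lemma dvdn_from_digits d f m : (forall i, d %| f i) -> d %| from_digits B f m.
Proof. by move=> df; apply: dvdn_sum => i _; apply: dvdn_mulr. Qed.

Lemma digit_from_digits f m i : 1 < B -> (forall j, j < m -> f j < B) ->
  digit B (from_digits B f m) i = if i < m then f i else 0.
Proof.
move=> B_gt1; elim: m f i => [|m IHm] f i f_lt.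
  by rewrite /digit /from_digits big_ord0 div0n mod0n.
rewrite /digit from_digitsS; case: i => [|i].
  by rewrite expn0 divn1 addnC mulnC modnMDl modn_small // f_lt.
rewrite expnS divnMA [f 0 + _]addnC [B * _]mulnC divnMDl ?(ltnW B_gt1) //.
rewrite (divn_small (f_lt 0 isT)) addn0; exact: IHm (fun j => f_lt j.+1).
Qed.

Lemma from_digits_digit n m : 1 < B -> n < B ^ m -> from_digits B (digit B n) m = n.
Proof.
move=> B_gt1; elim: m n => [|m IHm] n n_lt.
  by move: n_lt; rewrite expn0 ltnS leqn0 => /eqP->; rewrite /from_digits big_ord0.
rewrite from_digitsS /digit expn0 divn1.
rewrite (@eq_from_digits _ (digit B (n %/ B))); last first.
  by move=> i _; rewrite /digit expnS divnMA.
rewrite IHm; first by rewrite mulnC addnC -divn_eq.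
by rewrite ltn_divLR ?(ltnW B_gt1) // -expnSr.
Qed.

Lemma from_digits_borrow f m M c : 0 < M < m -> 0 < f M -> c <= B ->
  from_digits B (fun i => f i - (i == M) + (i == M.-1) * c) m + (B - c) * B ^ M.-1
  = from_digits B f m.
Proof.
move=> /andP[M_gt0 Mm] fM_gt0 cB.
have fE : from_digits B f m = from_digits B (fun i => f i - (i == M)) m + B ^ M.
  rewrite -[B ^ M]mul1n -(from_digits_delta _ _ 1 Mm) from_digitsD.
  by apply: eq_from_digits => i _; case: eqP => [->|]; rewrite /= ?subn0 ?addn0 //; lia.
rewrite -from_digitsD from_digits_delta; last lia.
by rewrite fE -addnA -mulnDl subnKC // -expnS prednK.
Qed.

End FromDigits.

Lemma digit_small B w q : w < B ^ q -> digit B w q = 0.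
Proof. by move=> w_lt; rewrite /digit divn_small ?mod0n. Qed.

Lemma digit_expn_split B K i q x : 0 < B -> q < K ->
  digit B x (i * K + q) = digit B (digit (B ^ K) x i) q.
Proof.
move=> B_gt0 qK; rewrite /digit expnD (mulnC i K) expnM divnMA.
set y := x %/ _; rewrite {1}(divn_eq y (B ^ K)).
have -> : B ^ K = B ^ (K - q).-1 * B * B ^ q.
  by rewrite -expnSr prednK ?subn_gt0 // -expnD subnK // ltnW.
by rewrite mulnA divnMDl ?expn_gt0 ?B_gt0 // mulnA modnMDl.
Qed.

Lemma digit_dvd B k w q : 0 < B -> q < k -> B ^ k %| w -> digit B w q = 0.
Proof.
move=> B_gt0 qk /dvdnP[c ->]; rewrite /digit.
have -> : B ^ k = B ^ (k - q).-1 * B * B ^ q.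
  by rewrite -expnSr prednK ?subn_gt0 // -expnD subnK // ltnW.
by rewrite mulnA mulnK ?expn_gt0 ?B_gt0 // mulnA modnMl.
Qed.

Lemma Ag_digits g (W : nat -> Prop) x : 1 < g -> 0 < x ->
  (forall p, digit g x p != 0 -> W p) -> Ag g W x.
Proof.
move=> g_gt1 x_gt0 W_digits.
pose F := [seq p <- iota 0 x | digit g x p != 0].
have xE : x = \sum_(p <- F) digit g x p * g ^ p.
  rewrite big_filter big_mkcond -{1}(@from_digits_digit g x x) //; last exact: ltn_expl.
  have -> : iota 0 x = index_iota 0 x by rewrite /index_iota subn0.
  rewrite big_mkord.
  by apply: eq_bigr => p _; case: eqP => // ->.
exists F, (digit g x); split => //.
- by apply: contraTneq x_gt0 => F0; rewrite xE F0 big_nil.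
- exact/filter_uniq/iota_uniq.
- by move=> p; rewrite mem_filter => /andP[/W_digits].
- move=> p; rewrite mem_filter lt0n => /andP[-> _] /=.
  by have := ltn_pmod (x %/ g ^ p) (ltnW g_gt1); rewrite /digit; lia.
Qed.

Lemma Ag_one g (W : nat -> Prop) : 1 < g -> W 0 -> Ag g W 1.
Proof.
move=> g_gt1 W0; exists [:: 0], (fun=> 1); split => //.
- by move=> f; rewrite inE => /eqP->.
- by move=> f _; rewrite leq_subRL ?addn1 // ltnW.
- by rewrite big_seq1.
Qed.

Definition block_class (h k t p : nat) : nat :=
  if p %% (k + t) < k then 0 else p %/ (k + t) %% h.-1 + 1.

Section BlockClass.
Variables h k t : nat.
Hypotheses (h_gt1 : 1 < h) (k_gt0 : 0 < k).

Lemma block_class_ltn p : block_class h k t p < h.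
Proof.
rewrite /block_class; case: ifP => _; first lia.
by rewrite addn1 -ltn_predRL ltn_pmod //; lia.
Qed.

Lemma block_class_block i q : q < k + t ->
  block_class h k t (i * (k + t) + q) = if q < k then 0 else i %% h.-1 + 1.
Proof.
move=> qK; have K_gt0 : 0 < k + t by rewrite addn_gt0 k_gt0.
by rewrite /block_class modnMDl (modn_small qK) divnMDl // (divn_small qK) addn0.
Qed.

Lemma block_class_intervals r : t <= k -> r < h ->
  union_inf_intervals (fun p => block_class h k t p = r) t.
Proof.
move=> tk rh; have K_gt0 : 0 < k + t by rewrite addn_gt0 k_gt0.
have pE p := divn_eq p (k + t); have p_mod p := ltn_pmod p K_gt0.
case: r rh => [|s] sh.
  exists (fun i => (i * (k + t), k)); split; [|split] => //.
  - by move=> i j [/eqP]; rewrite eqn_pmul2r // => /eqP.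
  move=> p /=; split.
    rewrite {1}(pE p) block_class_block ?p_mod //.
    case: ifP => [pk _ | _]; last by rewrite addn1.
    exists (p %/ (k + t)); have := pE p.
    by move: (p %/ (k + t)) (p %% (k + t)) pk => a r; lia.
  case=> i pi; rewrite (_ : p = i * (k + t) + (p - i * (k + t))); last lia.
  by rewrite block_class_block; [case: ifP => //; lia | lia].
exists (fun j => ((s + h.-1 * j) * (k + t) + k, t)); split; [|split] => //.
- move=> i j [/addIn/eqP]; rewrite eqn_pmul2r // eqn_add2l eqn_pmul2l; last lia.
  by move/eqP.
move=> p /=; split.
  rewrite {1}(pE p) block_class_block ?p_mod //.
  case: ifP => // pk /eqP; rewrite addn1 eqSS => /eqP ps.
  exists (p %/ (k + t) %/ h.-1).
  have -> : s + h.-1 * (p %/ (k + t) %/ h.-1) = p %/ (k + t).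
    by rewrite mulnC -ps addnC -divn_eq.
  by have := pE p; lia.
case=> j; set a := (s + _) * _ => pj.
rewrite (_ : p = (s + h.-1 * j) * (k + t) + (p - a)); last lia.
rewrite block_class_block ?ifF; [|lia..].
by rewrite [h.-1 * j]mulnC [s + _]addnC modnMDl modn_small ?addn1 //; lia.
Qed.

End BlockClass.

Section BlockDigits.
Variables g h k t : nat.
Hypotheses (g_gt1 : 1 < g) (k_gt0 : 0 < k).

Lemma Ag_block_low x : 0 < x -> (forall i, digit (g ^ (k + t)) x i < g ^ k) ->
  Ag g (fun p => block_class h k t p = 0) x.
Proof.
move=> x_gt0 x_low; apply: Ag_digits => // p.
have K_gt0 : 0 < k + t by rewrite addn_gt0 k_gt0.
rewrite (divn_eq p (k + t)) digit_expn_split ?block_class_block ?ltn_pmod //; last lia.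
case: ifP => // /negbT; rewrite -leqNgt => kq.
by rewrite digit_small ?eqxx // (leq_trans (x_low _)) // leq_pexp2l // ltnW.
Qed.

Lemma Ag_block_high s x : 0 < x -> (forall i, g ^ k %| digit (g ^ (k + t)) x i) ->
  (forall i, digit (g ^ (k + t)) x i != 0 -> i %% h.-1 + 1 = s) ->
  Ag g (fun p => block_class h k t p = s) x.
Proof.
move=> x_gt0 x_high x_class; apply: Ag_digits => // p.
have K_gt0 : 0 < k + t by rewrite addn_gt0 k_gt0.
rewrite (divn_eq p (k + t)) digit_expn_split ?block_class_block ?ltn_pmod //; last lia.
case: ifP => [qk | _ nz]; first by rewrite (@digit_dvd g k _ _ _ qk) ?eqxx ?x_high //; lia.
by apply: x_class; apply: contraNneq nz => ->; rewrite /digit div0n mod0n.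
Qed.

End BlockDigits.

Definition share (m v j : nat) : nat := v %/ m + (j < v %% m).

Lemma sum_ltn_ord r m : r <= m -> \sum_(j < m) (j < r) = r.
Proof.
move=> rm; rewrite (eq_bigr (fun j : 'I_m => if j < r then 1 else 0)) => [|j _]; last first.
  by case: (j < r).
by rewrite -big_mkcond (big_ord_narrow rm) sum_nat_const card_ord muln1.
Qed.

Lemma sum_share m v : 0 < m -> \sum_(j < m) share m v j = v.
Proof.
move=> m_gt0; rewrite big_split sum_nat_const card_ord /= sum_ltn_ord.
  by rewrite mulnC -divn_eq.
exact/ltnW/ltn_pmod.
Qed.

Lemma share_le m v c j : 0 < m -> v <= m * c -> share m v j <= c.
Proof.
move=> m_gt0 vc; rewrite /share.
have := divn_eq v m; have := ltn_pmod v m_gt0.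
set q := v %/ m; set r := v %% m => rm vE.
case: ltnP => [jr | _]; last by rewrite addn0 -(leq_pmul2l m_gt0) mulnC; lia.
rewrite addn1 -(ltn_pmul2l m_gt0) mulnC; lia.
Qed.

Lemma rep_ge1_cons (A : nat -> Prop) m a b :
  0 < m -> A a -> rep_ge1 A m.-1 b -> rep_ge1 A m (a + b).
Proof.
case: m => // m _ Aa [f [Af <-]].
exists (fun i : 'I_m.+1 => if unlift ord0 i is Some j then f j else a); split.
  by move=> i; case: unlift.
rewrite big_ord_recl unlift_none; congr (_ + _).
by apply: eq_bigr => i _; rewrite liftK.
Qed.

Lemma low_part_large a L v : a <= L -> v < a * L -> a * (L - 1) < v -> L - a < v %% L.
Proof.
move=> aL v_lt v_gt; have L_gt0 : 0 < L by case: posnP v_lt => // ->; rewrite muln0.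
have q_lt : v %/ L < a by rewrite ltn_divLR // mulnC.
have := divn_eq v L; move: (v %/ L) (v %% L) q_lt => q r q_lt vE.
have : q * L <= a.-1 * L by rewrite leq_mul2r -ltnS prednK ?q_lt ?orbT //; lia.
rewrite mulnBr muln1 in v_gt; rewrite -subn1 mulnBl mul1n.
have : L <= a * L by rewrite leq_pmull //; lia.
lia.
Qed.

Section SubBasis.
Variables g h t : nat.
Hypotheses (g_gt1 : 1 < g) (t_gt1 : 1 < t) (gt_le_h : g ^ t <= h).

Local Notation k := (t + h).
Local Notation L := (g ^ k).
Local Notation G := (g ^ (k + t)).
Local Notation W r := (fun p => block_class h k t p = r).
Local Notation B := (fun x => (exists r, r < h /\ Ag g (W r) x) /\ x <> 1).

Lemma g_le_gt : g <= g ^ t.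
Proof. by rewrite -{1}(expn1 g) leq_pexp2l // ltnW. Qed.

Lemma h_ge4 : 4 <= h.
Proof.
apply: leq_trans gt_le_h; apply: (@leq_trans (g ^ 2)); last by rewrite leq_pexp2l // ltnW.
by rewrite expnS expn1; nia.
Qed.

Lemma G_eq : G = L * g ^ t.
Proof. by rewrite expnD. Qed.

Lemma L_ge_ghS : g * (h + 1) <= L.
Proof. by rewrite expnD leq_mul ?g_le_gt // addn1 ltn_expl. Qed.

Lemma L_sub_gt_ge : h.-1 * g + 2 <= L - g ^ t.
Proof.
have : g ^ t * (h + 1) <= L by rewrite expnD leq_mul2l addn1 ltn_expl ?orbT.
have : g * h <= g ^ t * h by rewrite leq_mul2r g_le_gt orbT.
have := h_ge4; have : h.-1 * g + g = g * h by rewrite mulnC -mulnSr prednK //; lia.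
lia.
Qed.

Lemma L_le_G : L <= G.
Proof. by rewrite G_eq leq_pmulr // expn_gt0 ltnW. Qed.

Lemma L_gt1 : 1 < L.
Proof. by apply: leq_trans (ltn_expl 1 g_gt1) (leq_pexp2l (ltnW g_gt1) _); lia. Qed.

Lemma G_gt1 : 1 < G.
Proof. by apply: leq_trans (ltn_expl 1 g_gt1) (leq_pexp2l (ltnW g_gt1) _); lia. Qed.

(* A number [n] is handled through its first [n] base-[G] digits, enough since [n < G ^ n]. *)
Lemma from_digits_digit_self n : from_digits G (digit G n) n = n.
Proof. exact: from_digits_digit G_gt1 (ltn_expl n G_gt1). Qed.

Lemma B_low f n : 2 <= from_digits G f n -> (forall i, i < n -> f i < L) ->
  B (from_digits G f n).
Proof.
move=> x_ge2 f_lt; split; last lia.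
exists 0; split; first by have := h_ge4; lia.
apply: Ag_block_low => //; [lia | exact: ltnW x_ge2 | move=> i].
rewrite digit_from_digits ?G_gt1 //.
  by case: ifP => [/f_lt | _] //; rewrite expn_gt0 ltnW.
by move=> j j_lt; apply: leq_trans (f_lt j j_lt) L_le_G.
Qed.

Lemma B_high s f n : s < h -> 0 < from_digits G f n ->
  (forall i, i < n -> f i < G) -> (forall i, L %| f i) ->
  (forall i, i < n -> f i != 0 -> i %% h.-1 + 1 = s) -> B (from_digits G f n).
Proof.
move=> sh x_gt0 f_lt L_dvd f_class; split.
  exists s; split => //; apply: Ag_block_high => //; first lia.
    by move=> i; rewrite digit_from_digits ?G_gt1 //; case: ifP.
  move=> i; rewrite digit_from_digits ?G_gt1 //.
  by case: ifP => // i_lt; apply: f_class.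
have : L <= from_digits G f n by apply: dvdn_leq x_gt0 _; apply: dvdn_from_digits.
have := L_gt1; lia.
Qed.

Lemma rep_ge1_even_split m w n i1 : 0 < m -> (forall i, i < n -> w i <= m * (L - 1)) ->
  i1 < n -> m <= w i1 -> (0 < i1) || (2 * m <= w i1) -> rep_ge1 B m (from_digits G w n).
Proof.
move=> m_gt0 w_le i1n m_le w_i1.
exists (fun j : 'I_m => from_digits G (fun i => share m (w i) j) n); split; last first.
  rewrite (@from_digits_sum G m (fun j i => share m (w i) j)).
  by apply: eq_from_digits => i _; apply: sum_share.
move=> j; apply: B_low => [|i /w_le /(share_le _ _ _ j m_gt0)]; last by have := L_gt1; lia.
apply: leq_trans (@leq_term_from_digits G _ n i1 i1n).
have share_ge c : c * m <= w i1 -> c <= share m (w i1) j.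
  by move=> cm; apply: leq_trans (leq_addr _ _); rewrite leq_divRL.
have G_gt1 := G_gt1; case/orP: w_i1 => [i1_gt0 | w_ge].
  have : G ^ 1 <= G ^ i1 by apply: leq_pexp2l; lia.
  have := share_ge 1; rewrite mul1n expn1 => /(_ m_le); nia.
have : 0 < G ^ i1 by rewrite expn_gt0; lia.
have := share_ge 2 w_ge; nia.
Qed.

Definition high_part n s : nat :=
  from_digits G (fun i => if i %% h.-1 + 1 == s then digit G n i - digit G n i %% L else 0) n.

Lemma B_high_part n s : s < h -> high_part n s != 0 -> B (high_part n s).
Proof.
have G_gt0 : 0 < G by apply: ltnW G_gt1.
move=> sh nz; apply: (@B_high s) => //; first by rewrite lt0n.
- move=> i _; case: ifP => // _.
  exact: leq_ltn_trans (leq_subr _ _) (ltn_pmod _ G_gt0).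
- move=> i; case: ifP => // _.
  by rewrite {1}(divn_eq (digit G n i) L) addnK dvdn_mull.
- by move=> i _; case: ifP => [/eqP -> | _]; rewrite ?eqxx.
Qed.

Lemma sum_high_part n :
  \sum_(s < h.-1) high_part n s.+1 = from_digits G (fun i => digit G n i - digit G n i %% L) n.
Proof.
pose F s i := if i %% h.-1 + 1 == s.+1 then digit G n i - digit G n i %% L else 0.
rewrite (@from_digits_sum G h.-1 F); apply: eq_from_digits => i _.
have h'_gt0 : 0 < h.-1 by have := h_ge4; lia.
rewrite (bigD1 (Ordinal (ltn_pmod i h'_gt0))) // /F /= addn1 eqxx big1 ?addn0 // => s ne.
rewrite eqSS; case: eqP => // eq_s; case/eqP: ne; exact: val_inj.
Qed.

Lemma rep_ge1_large_digit n i0 : i0 < n -> h * (L - 1) < digit G n i0 -> rep_ge1 B h n.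
Proof.
move=> i0n v_big; set v := digit G n.
(* The [Z] classes without high part each receive [u], paid for by the low digit at [i0]. *)
pose z s := nat_of_bool (high_part n s == 0).
pose Z := \sum_(s < h.-1) z s.+1.
pose u := g * G ^ i0.
pose R := from_digits G (fun i => v i %% L - (i == i0) * (Z * g)) n.
have Z_le : Z <= h.-1.
  apply: (@leq_trans (\sum_(s < h.-1) 1)); first by apply: leq_sum => s _; apply: leq_b1.
  by rewrite sum_nat_const card_ord muln1.
have low_big : Z * g + 2 <= v i0 %% L.
  have : L - g ^ t < v i0 %% L.
    apply: low_part_large; first exact: leq_pexp2l (ltnW g_gt1) (leq_addr _ _).
      by rewrite mulnC -G_eq ltn_pmod // ltnW // G_gt1.
    by apply: leq_ltn_trans v_big; rewrite leq_mul2r gt_le_h orbT.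
  have := L_sub_gt_ge; have : Z * g <= h.-1 * g by rewrite leq_mul2r Z_le orbT.
  lia.
have nE : R + \sum_(s < h.-1) (high_part n s.+1 + z s.+1 * u) = n.
  rewrite big_split -big_distrl /= sum_high_part -/Z /u mulnA.
  rewrite -(@from_digits_delta G n i0 _ i0n) /R addnA !from_digitsD.
  rewrite -[RHS]from_digits_digit_self.
  apply: eq_from_digits => i _; move: low_big; rewrite /v.
  have := leq_mod (digit G n i) L; case: eqP => [-> | _]; rewrite /= ?mul1n ?mul0n.
    by move: (digit G n i0 %% L) => r; lia.
  by move: (digit G n i %% L) => r; lia.
have G_gt0 : 0 < G by have := G_gt1; lia.
rewrite -nE; apply: rep_ge1_cons; first by have := h_ge4; lia.
  apply: B_low => [|i _]; last first.
    by apply: leq_ltn_trans (leq_subr _ _) _; rewrite ltn_pmod // expn_gt0 ltnW.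
  apply: leq_trans (@leq_term_from_digits G _ n i0 i0n); rewrite eqxx mul1n.
  by apply: leq_trans (leq_pmulr _ _); [lia | rewrite expn_gt0 G_gt0].
exists (fun s : 'I_h.-1 => high_part n s.+1 + z s.+1 * u); split => // s.
rewrite /z; case: eqP => [-> | /eqP nz]; last first.
  by rewrite mul0n addn0; apply: B_high_part => //; have := ltn_ord s; lia.
rewrite add0n mul1n /u -(@from_digits_delta G n i0 _ i0n); apply: B_low => [|i _].
  by rewrite from_digits_delta // (leq_trans g_gt1) // leq_pmulr // expn_gt0 G_gt0.
by case: (i == i0); rewrite /= ?mul1n ?mul0n; have := L_ge_ghS; nia.
Qed.

Lemma rep_ge1_small_digits n : G ^ 2 <= n -> (forall i, i < n -> digit G n i < 2 * h) ->
  rep_ge1 B h n.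
Proof.
move=> n_ge v_small; have G_gt1 := G_gt1; have h_ge4 := h_ge4; have L_ge_ghS := L_ge_ghS.
pose M := trunc_log G n.
have M_ge2 : 2 <= M by apply: trunc_log_max.
have GM_le : G ^ M <= n by apply: trunc_logP; rewrite // (leq_trans _ n_ge) // expn_gt0 ltnW.
have Mn : M < n by apply: leq_trans (ltn_expl M G_gt1) GM_le.
have vM_gt0 : 0 < digit G n M.
  have GM_gt0 : 0 < G ^ M by rewrite expn_gt0 ltnW.
  rewrite /digit modn_small; first by rewrite divn_gt0.
  by rewrite ltn_divLR // -expnS trunc_log_ltn.
pose w i := digit G n i - (i == M) + (i == M.-1) * L.
have M_pos : 0 < M < n by rewrite Mn andbT; lia.
have nE : from_digits G w n + (G - L) * G ^ M.-1 = n.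
  by rewrite from_digits_borrow ?from_digits_digit_self ?L_le_G.
have M1n : M.-1 < n by lia.
rewrite -nE (addnC (from_digits G w n)); apply: rep_ge1_cons; first lia.
  rewrite -(@from_digits_delta G n M.-1 _ M1n); apply: (@B_high (M.-1 %% h.-1 + 1)).
  - by rewrite addn1 -ltn_predRL ltn_pmod //; lia.
  - by rewrite from_digits_delta // muln_gt0 subn_gt0 ltn_exp2l ?expn_gt0; lia.
  - by move=> i _; case: (i == M.-1); rewrite /= ?mul1n ?mul0n; lia.
  - by move=> i; rewrite dvdn_mull // dvdn_sub // G_eq dvdn_mulr.
  - by move=> i _; case: (i =P M.-1) => [-> // | _]; rewrite mul0n.
have L_ge_2h : 2 * h + 2 <= L.
  by apply: leq_trans L_ge_ghS; rewrite (_ : 2 * h + 2 = 2 * (h + 1)) ?leq_mul2r; lia.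
have MM1 : (M.-1 == M) = false by apply/eqP; lia.
apply: (@rep_ge1_even_split h.-1 w n M.-1) => //; rewrite /w ?eqxx ?MM1 ?mul1n ?subn0.
- lia.
- move=> i /v_small; have : 3 * (L - 1) <= h.-1 * (L - 1) by rewrite leq_mul2r; lia.
  by case: (i == M); case: (i == M.-1); rewrite ?mul1n ?mul0n; lia.
- lia.
- by apply/orP; left; lia.
Qed.

Lemma rep_ge1_sub_basis n : G ^ 2 <= n -> rep_ge1 B h n.
Proof.
move=> n_ge.
case: (boolP [exists i : 'I_n, h * (L - 1) < digit G n i]).
  by case/existsP => i v_big; apply: rep_ge1_large_digit (ltn_ord i) v_big.
move/existsPn => no_big.
have v_le i : i < n -> digit G n i <= h * (L - 1).
  by move=> i_lt; rewrite leqNgt (no_big (Ordinal i_lt)).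
case: (boolP [exists i : 'I_n, (h <= digit G n i) && ((0 < i) || (2 * h <= digit G n i))]).
  case/existsP => i /andP[h_le i_pos].
  rewrite -[n in rep_ge1 _ _ n]from_digits_digit_self.
  by apply: (@rep_ge1_even_split h (digit G n) n i) => //; have := h_ge4; lia.
move/existsPn => small; apply: rep_ge1_small_digits => // i i_lt.
by have := small (Ordinal i_lt); rewrite /= negb_and negb_or -!ltnNge; lia.
Qed.

End SubBasis.

Theorem theorem1 (g h t : nat) :
  2 <= g -> 2 <= t -> g ^ t <= h ->
  exists W : nat -> nat -> Prop,
    (forall n, exists r, r < h /\ W r n) /\
    (forall r1 r2 n, r1 < h -> r2 < h -> W r1 n -> W r2 n -> r1 = r2) /\
    (forall r, r < h -> union_inf_intervals (W r) t) /\
    ~ minimal_asymptotic_basis (fun n => exists r, r < h /\ Ag g (W r) n) h.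
Proof.
move=> g_gt1 t_gt1 gt_le_h; have h_ge4 := @h_ge4 g h t g_gt1 t_gt1 gt_le_h.
pose W r p := block_class h (t + h) t p = r.
exists W; split; [|split; [|split]].
- by move=> p; exists (block_class h (t + h) t p); split => //; apply: block_class_ltn; lia.
- by move=> r1 r2 p _ _ <- <-.
- by move=> r rh; apply: block_class_intervals => //; lia.
case=> _ /(_ (fun x => (exists r, r < h /\ Ag g (W r) x) /\ x <> 1)) minimal.
apply: minimal; first by move=> x [].
  exists 1; split; last by case.
  exists 0; split; first lia.
  by apply: Ag_one; rewrite // /W /block_class mod0n addn_gt0 (ltnW t_gt1).
exists ((g ^ (t + h + t)) ^ 2) => n; exact: rep_ge1_sub_basis.
Qed.
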